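(* Let $u$ be a smooth solution of the equivariant Skyrme equation in $\Omega$ with $u(t,0)=0$. Then $u$ is continuous at $(0,0)$, i.e. $\lim_{(t,r)\in\Omega,\,(t,r)\to(0,0)}u(t,r)=0$, and there exist $t_*\in(0,T_0]$ and a constant $C$ depending only on $E(T_0)$ such that \[ |u(t,r)|\le C\,r^{1/2}\quad\text{for all }(t,r)\in\Omega\text{ with }t\le t_*. \]
   Context: Fix $\alpha>0$, $T_0>0$. The equivariant Skyrme equation is \[ w(u_{tt}-u_{rr}) - \Big(1-\tfrac{\alpha^2\sin^2u}{r^2}\Big)\tfrac{u_r}{r} + \tfrac{\sin 2u}{2r^2}\big[\alpha^2(u_t^2-u_r^2)+1\big]=0,\qquad w:=1+\tfrac{\alpha^2\sin^2u}{r^2}. \] $\Omega=\{(t,r):0<t\le T_0,\ 0\le r\le t\}$; a smooth solution in $\Omega$ is a smooth function on $\Omega$ satisfying the equation for $r>0$. Energy density $e:=w\frac{u_t^2+u_r^2}{2}+\frac{\sin^2u}{2r^2}$; energy $E(T):=\int_0^T e(T,r)\,r\,dr$. *)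

From Stdlib Require Import Reals Lra ClassicalEpsilon.
Open Scope R_scope.

Definition Omega (T0 t r : R) : Prop := 0 < t <= T0 /\ 0 <= r <= t.

Definition open2 (U : R -> R -> Prop) : Prop :=
  forall t r, U t r -> exists d, 0 < d /\
    forall t' r', Rabs (t' - t) < d -> Rabs (r' - r) < d -> U t' r'.

Definition cont_on (U : R -> R -> Prop) (f : R -> R -> R) : Prop :=
  forall t r, U t r -> forall eps, 0 < eps -> exists d, 0 < d /\
    forall t' r', U t' r' -> Rabs (t' - t) < d -> Rabs (r' - r) < d ->
      Rabs (f t' r' - f t r) < eps.

Definition partial_t (f g : R -> R -> R) (t r : R) : Prop :=
  derivable_pt_lim (fun s => f s r) t (g t r).
Definition partial_r (f g : R -> R -> R) (t r : R) : Prop :=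
  derivable_pt_lim (fun s => f t s) r (g t r).

Fixpoint Ck (k : nat) (U : R -> R -> Prop) (f : R -> R -> R) : Prop :=
  match k with
  | O => cont_on U f
  | S m => cont_on U f /\ exists ft fr : R -> R -> R,
      (forall t r, U t r -> partial_t f ft t r /\ partial_r f fr t r) /\
      Ck m U ft /\ Ck m U fr
  end.

Definition Cinf (U : R -> R -> Prop) (f : R -> R -> R) : Prop :=
  forall k, Ck k U f.

Definition wgt (alpha u r : R) : R := 1 + alpha ^ 2 * sin u ^ 2 / r ^ 2.

Definition skyrme_eq (alpha r u ut ur utt urr : R) : Prop :=
  wgt alpha u r * (utt - urr)
  - (1 - alpha ^ 2 * sin u ^ 2 / r ^ 2) * (ur / r)
  + sin (2 * u) / (2 * r ^ 2) * (alpha ^ 2 * (ut ^ 2 - ur ^ 2) + 1) = 0.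

Definition edens (alpha : R) (u ut ur : R -> R -> R) (t r : R) : R :=
  wgt alpha (u t r) r * (ut t r ^ 2 + ur t r ^ 2) / 2
  + sin (u t r) ^ 2 / (2 * r ^ 2).

(* E(T) = int_0^T e(T,r) r dr  (Riemann integral; chosen by classical
   description, it is the integral whenever the integrand is Riemann
   integrable, which is the case for smooth solutions with u(t,0)=0). *)
Definition energy (alpha : R) (u ut ur : R -> R -> R) (T : R) : R :=
  epsilon (inhabits 0)
    (fun E => exists pr : Riemann_integrable
                 (fun r => edens alpha u ut ur T r * r) 0 T,
              RiemannInt pr = E).

From Stdlib Require Import Reals Lra Psatz Classical ClassicalEpsilon.
From Coquelicot Require Import Coquelicot.
Open Scope R_scope.

(* Write [rdens] for the energy density weighted by the area element, e r, and
   [flux] for the radial energy flux F = w u_t u_r r.  For a C^2 solution the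
   Skyrme equation is, off the axis, the local conservation law
       d/dt (e r) = d/dr F.
   1. Energy monotonicity.  Integrating the law over the annuli eps t <= r <= t
      and using that e r + F = r (w (u_t + u_r)^2 / 2 + sin^2 u / (2 r^2)) >= 0
      on the cone boundary r = t, the energy E(t) = int_0^t e(t,r) r dr is
      nondecreasing: the inner disc r < eps t only contributes O(eps), because
      e r = O(r) near the axis where u(t,0) = 0.
   2. Pointwise estimate.  As u(t,0) = 0,
        1 - cos u(t,r) = int_0^r sin u u_r <= r (E(t) + 1/(2 alpha^2)),
      by the AM-GM inequality sin u u_r <= r (e rho) + 1/(2 alpha^2), rho <= r.
   3. With K = |E(T0)| + 1/(2 alpha^2) + 1 and t <= 1/(8K), the intermediate
      value theorem gives |u| < 1, hence u^2/4 <= 1 - cos u <= K r, that is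
      |u| <= 2 sqrt K sqrt r; this bound also gives continuity at the vertex. *)

Lemma cont_on_2d_pt (U : R -> R -> Prop) (f : R -> R -> R) (t r : R) :
  open2 U -> cont_on U f -> U t r -> continuity_2d_pt f t r.
Proof.
  intros HU Hf Htr eps.
  destruct (HU t r Htr) as [d0 [Hd0 Hball]].
  destruct (Hf t r Htr eps (cond_pos eps)) as [d1 [Hd1 Hclose]].
  assert (Hm : 0 < Rmin d0 d1) by (apply Rmin_pos; lra).
  exists (mkposreal _ Hm); simpl; intros t' r' Ht' Hr'.
  pose proof (Rmin_l d0 d1); pose proof (Rmin_r d0 d1).
  apply Hclose; [apply Hball| |]; lra.
Qed.

Lemma continuity_2d_pt_pow (f : R -> R -> R) (x y : R) (n : nat) :
  continuity_2d_pt f x y -> continuity_2d_pt (fun a b => f a b ^ n) x y.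
Proof.
  intros Hf. induction n as [|n IH]; simpl.
  - apply continuity_2d_pt_const.
  - now apply continuity_2d_pt_mult.
Qed.

Lemma continuity_2d_pt_sin (f : R -> R -> R) (x y : R) :
  continuity_2d_pt f x y -> continuity_2d_pt (fun a b => sin (f a b)) x y.
Proof. apply continuity_1d_2d_pt_comp, continuity_sin. Qed.

Lemma continuity_2d_pt_cos (f : R -> R -> R) (x y : R) :
  continuity_2d_pt f x y -> continuity_2d_pt (fun a b => cos (f a b)) x y.
Proof. apply continuity_1d_2d_pt_comp, continuity_cos. Qed.

Ltac continuity_2d :=
  first [ apply continuity_2d_pt_const | apply continuity_2d_pt_id1
        | apply continuity_2d_pt_id2 | apply continuity_2d_pt_plus
        | apply continuity_2d_pt_minus | apply continuity_2d_pt_opp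
        | apply continuity_2d_pt_mult | apply continuity_2d_pt_pow
        | apply continuity_2d_pt_sin | apply continuity_2d_pt_cos
        | apply continuity_2d_pt_inv ].

Lemma continuity_2d_pt_r (f : R -> R -> R) (t r : R) :
  continuity_2d_pt f t r -> continuity_pt (fun s => f t s) r.
Proof.
  intros Hf eps Heps.
  destruct (Hf (mkposreal eps Heps)) as [d Hd].
  exists d; split; [apply cond_pos|].
  intros s [_ Hs]. simpl in *. unfold R_dist in *.
  apply Hd; [|exact Hs]. rewrite Rminus_eq_0, Rabs_R0; apply cond_pos.
Qed.

Lemma continuous_of_continuity_pt (f : R -> R) (x : R) :
  continuity_pt f x -> continuous f x.
Proof. apply continuity_pt_filterlim. Qed.

Lemma abs_diff_le_of_derive_bound (g dg : R -> R) (a b M : R) :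
  a <= b ->
  (forall x, a <= x <= b -> is_derive g x (dg x)) ->
  (forall x, a <= x <= b -> Rabs (dg x) <= M) ->
  Rabs (g b - g a) <= M * (b - a).
Proof.
  intros Hab Hd HM.
  destruct (MVT_gen g a b dg) as [c [Hc Heq]].
  - intros x Hx. rewrite Rmin_left, Rmax_right in Hx by lra. apply Hd; lra.
  - intros x Hx. rewrite Rmin_left, Rmax_right in Hx by lra.
    apply continuity_pt_filterlim, (ex_derive_continuous (K := R_AbsRing) (V := R_NormedModule)).
    eexists; now apply Hd.
  - rewrite Rmin_left, Rmax_right in Hc by lra.
    rewrite Heq, Rabs_mult, (Rabs_right (b - a)) by lra.
    apply Rmult_le_compat_r; [lra | now apply HM].
Qed.

Lemma abs_sin_le (x : R) : Rabs (sin x) <= Rabs x.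
Proof.
  assert (Hd : forall z, is_derive sin z (cos z)) by (intros; apply is_derive_sin).
  assert (Hb : forall z, Rabs (cos z) <= 1) by (intros; apply Rabs_le, COS_bound).
  destruct (Rle_dec 0 x) as [Hx|Hx].
  - pose proof (abs_diff_le_of_derive_bound sin cos 0 x 1 Hx (fun z _ => Hd z) (fun z _ => Hb z)).
    rewrite sin_0, !Rminus_0_r, Rmult_1_l in H. now rewrite (Rabs_right x) by lra.
  - assert (Hx' : x <= 0) by lra.
    pose proof (abs_diff_le_of_derive_bound sin cos x 0 1 Hx' (fun z _ => Hd z) (fun z _ => Hb z)).
    rewrite sin_0, Rminus_0_l, Rabs_Ropp, Rmult_1_l in H. rewrite (Rabs_left x); lra.
Qed.

(* Quadratic upper bound for cos on [-1, 1], from the alternating Taylor series. *)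
Lemma cos_le_quadratic (x : R) : -1 <= x <= 1 -> cos x <= 1 - x ^ 2 / 4.
Proof.
  intros Hx. pose proof PI2_1.
  destruct (cos_bound x 0) as [_ Hc]; [lra | lra |].
  unfold cos_approx, cos_term in Hc. simpl in Hc.
  assert (Hc' : cos x <= 1 - x ^ 2 / 2 + x ^ 4 / 24)
    by (eapply Rle_trans; [exact Hc | right; field]).
  assert (0 <= x ^ 2) by apply pow2_ge_0.
  assert (x ^ 2 <= 1) by nra.
  assert (x ^ 4 <= x ^ 2) by (replace (x ^ 4) with (x ^ 2 * x ^ 2) by ring; nra).
  lra.
Qed.

Lemma IVT_closed (f : R -> R) (a b c : R) :
  a <= b -> (forall x, a <= x <= b -> continuity_pt f x) -> f a <= c <= f b ->
  exists x, a <= x <= b /\ f x = c.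
Proof.
  intros Hab Hf Hc.
  destruct (Req_dec (f a) c) as [E | Ea]; [exists a; split; [lra | exact E] |].
  destruct (Req_dec (f b) c) as [E | Eb]; [exists b; split; [lra | exact E] |].
  destruct (Ranalysis5.IVT_interv (fun x => f x - c) a b) as [x [Hx Hfx]].
  - intros x Hx. apply continuity_pt_minus; [now apply Hf |].
    now apply continuity_pt_const.
  - destruct (Req_dec a b) as [->|]; lra.
  - lra.
  - lra.
  - exists x; split; [exact Hx | lra].
Qed.

Lemma le_of_le_plus_eps (x y a C : R) :
  0 < a -> 0 <= C -> (forall e, 0 < e <= a -> x <= y + e * C) -> x <= y.
Proof.
  intros Ha HC H. apply Rnot_lt_le; intro Hlt.
  set (e := Rmin a ((x - y) / (2 * (C + 1)))).
  assert (He : 0 < e <= a).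
  { split; [apply Rmin_pos; [lra | apply Rdiv_lt_0_compat; lra] | apply Rmin_l]. }
  assert (e * (C + 1) <= (x - y) / 2).
  { apply Rle_trans with ((x - y) / (2 * (C + 1)) * (C + 1)).
    - apply Rmult_le_compat_r; [lra | apply Rmin_r].
    - right; field; lra. }
  specialize (H e He). nra.
Qed.

Fixpoint cover_bound (g : R -> R -> R) (l : list (Compactness.Tn 2 R)) : R :=
  match l with
  | nil => 0
  | cons p l' => Rmax (cover_bound g l') (Rabs (g (fst p) (fst (snd p))) + 1)
  end.

Lemma cover_bound_in (g : R -> R -> R) (l : list (Compactness.Tn 2 R)) p :
  List.In p l -> Rabs (g (fst p) (fst (snd p))) + 1 <= cover_bound g l.
Proof.
  induction l as [|q l IH]; simpl; [tauto |].
  intros [-> | Hin]; [apply Rmax_r |].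
  eapply Rle_trans; [now apply IH | apply Rmax_l].
Qed.

Lemma bounded_on_rectangle (g : R -> R -> R) (a b c d : R) :
  (forall x y, a <= x <= b -> c <= y <= d -> continuity_2d_pt g x y) ->
  exists M, forall x y, a <= x <= b -> c <= y <= d -> Rabs (g x y) <= M.
Proof.
  intros Hc.
  set (P := fun (p : Compactness.Tn 2 R) (e : posreal) =>
        bounded_n 2 (a, (c, tt)) (b, (d, tt)) p ->
        forall x y, Rabs (x - fst p) < e -> Rabs (y - fst (snd p)) < e ->
          Rabs (g x y - g (fst p) (fst (snd p))) < 1).
  assert (HP : forall p, exists e, P p e).
  { intros [x [y []]]. unfold P; simpl.
    destruct (classic (a <= x <= b /\ c <= y <= d)) as [[Hx Hy] | Hout].
    - destruct (Hc x y Hx Hy (mkposreal 1 Rlt_0_1)) as [e He].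
      exists e. intros _ x' y' Hx' Hy'. now apply He.
    - exists (mkposreal 1 Rlt_0_1). intros Hin. exfalso; apply Hout; tauto. }
  set (delta := fun p => epsilon (inhabits (mkposreal 1 Rlt_0_1)) (P p)).
  assert (Hdelta : forall p, P p (delta p)) by (intros p; apply epsilon_spec, HP).
  apply NNPP; intro Hunb.
  apply (compactness_list 2 (a, (c, tt)) (b, (d, tt)) delta).
  intros [l Hl]. apply Hunb. exists (cover_bound g l).
  intros x y Hx Hy.
  destruct (Hl (x, (y, tt))) as [[u [v []]] [Hin [Hb [Hux [Hvy _]]]]]; [simpl; tauto |].
  pose proof (Hdelta (u, (v, tt)) Hb x y Hux Hvy) as Hclose.
  pose proof (cover_bound_in g l _ Hin) as Hbound. simpl in *.
  pose proof (Rabs_triang_inv (g x y) (g u v)). lra.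
Qed.

Lemma uniform_neighbourhood (U : R -> R -> Prop) (t1 T0 : R) :
  open2 U -> 0 < t1 <= T0 ->
  (forall t r, t1 <= t <= T0 -> 0 <= r <= t -> U t r) ->
  exists eta, 0 < eta /\ forall t r, t1 <= t <= T0 -> 0 <= r <= t ->
    forall t' r', Rabs (t' - t) < eta -> Rabs (r' - r) < eta -> U t' r'.
Proof.
  intros HU Ht HK.
  (* points (x, y) of the rectangle are projected to (x, min y x) on the cone *)
  set (P := fun (x y : R) (e : posreal) =>
        t1 <= x <= T0 -> 0 <= y <= T0 ->
        forall t' r', Rabs (t' - x) < 2 * e -> Rabs (r' - Rmin y x) < 2 * e -> U t' r').
  assert (HP : forall x y, exists e, P x y e).
  { intros x y. unfold P.
    destruct (classic (t1 <= x <= T0 /\ 0 <= y <= T0)) as [[Hx Hy] | Hout].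
    - assert (HUq : U x (Rmin y x)).
      { apply HK; [exact Hx | split; [apply Rmin_glb; lra | apply Rmin_r]]. }
      destruct (HU _ _ HUq) as [d0 [Hd0 Hball]].
      assert (Hp : 0 < d0 / 2) by lra.
      exists (mkposreal _ Hp). simpl. intros _ _ t' r' H1 H2. apply Hball; lra.
    - exists (mkposreal 1 Rlt_0_1). intros H1 H2. exfalso; apply Hout; tauto. }
  set (delta := fun x y => epsilon (inhabits (mkposreal 1 Rlt_0_1)) (P x y)).
  assert (Hdelta : forall x y, P x y (delta x y)) by (intros; apply epsilon_spec, HP).
  destruct (compactness_value_2d t1 T0 0 T0 delta) as [d Hd].
  exists d. split; [apply cond_pos |].
  intros t r Htt Hr t' r' H1 H2.
  apply NNPP; intro HN.
  apply (Hd t r Htt (conj (proj1 Hr) (Rle_trans _ _ _ (proj2 Hr) (proj2 Htt)))).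
  intros [x [y [Hx [Hy [Hxt [Hyr Hdd]]]]]]. apply HN.
  apply Rabs_def2 in H1; apply Rabs_def2 in H2;
    apply Rabs_def2 in Hxt; apply Rabs_def2 in Hyr.
  apply (Hdelta x y Hx Hy); apply Rabs_def1; unfold Rmin in *;
    try destruct (Rle_dec y x); lra.
Qed.

Lemma derivable_pt_lim_ext_loc (f g : R -> R) (x l : R) :
  (exists d, 0 < d /\ forall y, Rabs (y - x) < d -> f y = g y) ->
  derivable_pt_lim f x l -> derivable_pt_lim g x l.
Proof.
  intros [d [Hd Heq]] Hf. apply is_derive_Reals. apply is_derive_Reals in Hf.
  eapply is_derive_ext_loc; [| exact Hf].
  exists (mkposreal d Hd). intros y Hy. now apply Heq.
Qed.

Lemma cont_on_ext (U : R -> R -> Prop) (f g : R -> R -> R) :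
  (forall t r, U t r -> f t r = g t r) -> cont_on U f -> cont_on U g.
Proof.
  intros E Hf t r Htr eps Heps.
  destruct (Hf t r Htr eps Heps) as [d [Hd H]]. exists d; split; [exact Hd |].
  intros t' r' H1 H2 H3. rewrite <- !E by assumption. auto.
Qed.

Lemma interval_between (lo hi a b z : R) :
  lo <= a <= hi -> lo <= b <= hi -> Rmin a b <= z <= Rmax a b -> lo <= z <= hi.
Proof.
  intros Ha Hb [Hz1 Hz2]. split.
  - eapply Rle_trans; [| exact Hz1]. apply Rmin_glb; lra.
  - eapply Rle_trans; [exact Hz2 |]. apply Rmax_lub; lra.
Qed.

Lemma ex_RInt_of_continuity (f : R -> R) (a b : R) :
  (forall z, Rmin a b <= z <= Rmax a b -> continuity_pt f z) -> ex_RInt f a b.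
Proof.
  intros H. apply (ex_RInt_continuous (V := R_CompleteNormedModule)).
  intros z Hz. now apply continuous_of_continuity_pt, H.
Qed.

Lemma ex_RInt_right_continuous_0 (f : R -> R) (b : R) :
  0 < b ->
  (forall z, 0 < z <= b -> continuity_pt f z) ->
  (forall eps, 0 < eps -> exists d, 0 < d /\ forall z, 0 < z < d -> Rabs (f z - f 0) < eps) ->
  ex_RInt f 0 b.
Proof.
  intros Hb Hc H0.
  (* f (max 0 z) agrees with f on [0, b] and is continuous on all of [0, b] *)
  apply ex_RInt_ext with (fun z => f (Rmax 0 z)).
  { intros x Hx. rewrite Rmin_left, Rmax_right in Hx by lra. rewrite Rmax_right; lra. }
  apply ex_RInt_of_continuity. rewrite Rmin_left, Rmax_right by lra. intros z Hz.
  intros eps Heps. simpl. unfold R_dist.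
  destruct (Req_dec z 0) as [-> | Hz0].
  - destruct (H0 eps Heps) as [d [Hd Hclose]]. exists d. split; [exact Hd |].
    intros y [_ Hy]. simpl in Hy. unfold R_dist in Hy. rewrite (Rmax_left 0 0) by lra.
    destruct (Rle_dec y 0) as [Hy0 | Hy0].
    + rewrite Rmax_left, Rminus_eq_0, Rabs_R0; lra.
    + rewrite Rmax_right by lra. apply Hclose.
      rewrite Rminus_0_r, Rabs_right in Hy; lra.
  - destruct (Hc z ltac:(lra) eps Heps) as [d [Hd Hclose]].
    exists (Rmin d z). split; [apply Rmin_pos; lra |].
    intros y [_ Hy]. simpl in Hy. unfold R_dist in Hy.
    pose proof (Rmin_l d z); pose proof (Rmin_r d z).
    assert (Hyz : Rabs (y - z) < z) by lra. apply Rabs_def2 in Hyz.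
    rewrite (Rmax_right 0 z), (Rmax_right 0 y) by lra.
    destruct (Req_dec y z) as [-> | Hyz'].
    + rewrite Rminus_eq_0, Rabs_R0; lra.
    + apply Hclose. split; [split; [exact I | auto] |]. simpl. unfold R_dist. lra.
Qed.

Lemma partial_t_transfer (U : R -> R -> Prop) (f g l : R -> R -> R) (t r : R) :
  open2 U -> (forall t r, U t r -> f t r = g t r) -> U t r ->
  partial_t f l t r -> partial_t g l t r.
Proof.
  intros HU E Htr. apply derivable_pt_lim_ext_loc.
  destruct (HU t r Htr) as [d [Hd Hball]]. exists d; split; [exact Hd |].
  intros s Hs. apply E, Hball; [exact Hs |]. rewrite Rminus_eq_0, Rabs_R0; lra.
Qed.

Lemma partial_r_transfer (U : R -> R -> Prop) (f g l : R -> R -> R) (t r : R) :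
  open2 U -> (forall t r, U t r -> f t r = g t r) -> U t r ->
  partial_r f l t r -> partial_r g l t r.
Proof.
  intros HU E Htr. apply derivable_pt_lim_ext_loc.
  destruct (HU t r Htr) as [d [Hd Hball]]. exists d; split; [exact Hd |].
  intros s Hs. apply E, Hball; [| exact Hs]. rewrite Rminus_eq_0, Rabs_R0; lra.
Qed.

Lemma mixed_partials_eq (U : R -> R -> Prop) (u ut ur utr urt : R -> R -> R) :
  open2 U ->
  (forall t r, U t r -> partial_t u ut t r /\ partial_r u ur t r /\
     partial_r ut utr t r /\ partial_t ur urt t r) ->
  cont_on U utr -> cont_on U urt ->
  forall t r, U t r -> urt t r = utr t r.
Proof.
  intros HU Hd Cutr Curt x y Hxy.
  assert (Irt : forall a b, U a b ->
            is_derive (fun z => Derive (fun s => u z s) b) a (urt a b)).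
  { intros a b Hab. apply is_derive_Reals.
    eapply derivable_pt_lim_ext_loc; [| apply (Hd a b Hab)].
    destruct (HU a b Hab) as [d [Hd0 Hball]]. exists d; split; [exact Hd0 |].
    intros z Hz. symmetry. apply is_derive_unique, is_derive_Reals, Hd, Hball; [exact Hz |].
    rewrite Rminus_eq_0, Rabs_R0; lra. }
  assert (Itr : forall a b, U a b ->
            is_derive (fun z => Derive (fun s => u s z) a) b (utr a b)).
  { intros a b Hab. apply is_derive_Reals.
    eapply derivable_pt_lim_ext_loc; [| apply (Hd a b Hab)].
    destruct (HU a b Hab) as [d [Hd0 Hball]]. exists d; split; [exact Hd0 |].
    intros z Hz. symmetry. apply is_derive_unique, is_derive_Reals, Hd, Hball; [| exact Hz].
    rewrite Rminus_eq_0, Rabs_R0; lra. }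
  destruct (HU x y Hxy) as [d [Hd0 Hball]].
  rewrite <- (is_derive_unique _ _ _ (Irt x y Hxy)), <- (is_derive_unique _ _ _ (Itr x y Hxy)).
  apply Schwarz.
  - exists (mkposreal d Hd0). simpl. intros a b Ha Hb.
    assert (Hab : U a b) by auto.
    repeat split.
    + exists (ut a b). apply is_derive_Reals, (Hd a b Hab).
    + exists (ur a b). apply is_derive_Reals, (Hd a b Hab).
    + exists (urt a b). now apply Irt.
    + exists (utr a b). now apply Itr.
  - apply continuity_2d_pt_ext_loc with urt; [| now apply cont_on_2d_pt with U].
    exists (mkposreal d Hd0). simpl. intros a b Ha Hb.
    symmetry. apply is_derive_unique, Irt. auto.
  - apply continuity_2d_pt_ext_loc with utr; [| now apply cont_on_2d_pt with U].
    exists (mkposreal d Hd0). simpl. intros a b Ha Hb.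
    symmetry. apply is_derive_unique, Itr. auto.
Qed.

Record C2_on {U : R -> R -> Prop} {u ut ur utt utr urr : R -> R -> R} : Prop := {
  C2_dt_u : forall t r, U t r -> partial_t u ut t r;
  C2_dr_u : forall t r, U t r -> partial_r u ur t r;
  C2_dt_ut : forall t r, U t r -> partial_t ut utt t r;
  C2_dr_ut : forall t r, U t r -> partial_r ut utr t r;
  C2_dt_ur : forall t r, U t r -> partial_t ur utr t r;
  C2_dr_ur : forall t r, U t r -> partial_r ur urr t r;
  C2_cont_u : cont_on U u;
  C2_cont_ut : cont_on U ut;
  C2_cont_ur : cont_on U ur;
  C2_cont_utt : cont_on U utt;
  C2_cont_utr : cont_on U utr;
  C2_cont_urr : cont_on U urr }.
Arguments C2_on : clear implicits.

(* A smooth function on an open set, with given first and pure second partials,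
   is C^2 there; the mixed partial is provided by [Cinf] and Schwarz's theorem. *)
Lemma C2_of_smooth (U : R -> R -> Prop) (u ut ur utt urr : R -> R -> R) :
  open2 U -> Cinf U u ->
  (forall t r, U t r ->
     partial_t u ut t r /\ partial_r u ur t r /\
     partial_t ut utt t r /\ partial_r ur urr t r) ->
  exists utr, C2_on U u ut ur utt utr urr.
Proof.
  intros HU Hinf Hp.
  destruct (Hinf 2%nat) as [Cu [ft [fr [Hd [[Cft [ftt [ftr [Hdt [Cftt Cftr]]]]]
                                          [Cfr [frt [frr [Hdr [Cfrt Cfrr]]]]]]]]]].
  simpl in *.
  assert (Eft : forall t r, U t r -> ft t r = ut t r)
    by (intros t r H; eapply uniqueness_limite; [apply (Hd t r H) | apply (Hp t r H)]).
  assert (Efr : forall t r, U t r -> fr t r = ur t r)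
    by (intros t r H; eapply uniqueness_limite; [apply (Hd t r H) | apply (Hp t r H)]).
  assert (Dtt : forall t r, U t r -> partial_t ut ftt t r)
    by (intros t r H; apply (partial_t_transfer U ft); auto; apply Hdt, H).
  assert (Dtr : forall t r, U t r -> partial_r ut ftr t r)
    by (intros t r H; apply (partial_r_transfer U ft); auto; apply Hdt, H).
  assert (Drt : forall t r, U t r -> partial_t ur frt t r)
    by (intros t r H; apply (partial_t_transfer U fr); auto; apply Hdr, H).
  assert (Drr : forall t r, U t r -> partial_r ur frr t r)
    by (intros t r H; apply (partial_r_transfer U fr); auto; apply Hdr, H).
  assert (Ett : forall t r, U t r -> ftt t r = utt t r)
    by (intros t r H; eapply uniqueness_limite; [apply (Dtt t r H) | apply (Hp t r H)]).
  assert (Err : forall t r, U t r -> frr t r = urr t r)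
    by (intros t r H; eapply uniqueness_limite; [apply (Drr t r H) | apply (Hp t r H)]).
  assert (Esch : forall t r, U t r -> frt t r = ftr t r).
  { apply (mixed_partials_eq U u ut ur); auto.
    intros t r H. repeat split; auto; apply (Hp t r H). }
  exists ftr. constructor; auto; try (intros t r H; apply (Hp t r H)).
  - intros t r H. unfold partial_t. rewrite <- Esch by exact H. now apply Drt.
  - now apply cont_on_ext with ft.
  - now apply cont_on_ext with fr.
  - now apply cont_on_ext with ftt.
  - now apply cont_on_ext with frr.
Qed.

Definition rdens (alpha : R) (u ut ur : R -> R -> R) (t r : R) : R :=
  edens alpha u ut ur t r * r.

Definition rdens_t (alpha : R) (u ut ur utt utr : R -> R -> R) (t r : R) : R :=
  (alpha ^ 2 * (2 * sin (u t r) * cos (u t r) * ut t r) / r ^ 2 * (ut t r ^ 2 + ur t r ^ 2)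
   + wgt alpha (u t r) r * (2 * ut t r * utt t r + 2 * ur t r * utr t r)) / 2 * r
  + sin (u t r) * cos (u t r) * ut t r / r.

Definition flux (alpha : R) (u ut ur : R -> R -> R) (t r : R) : R :=
  wgt alpha (u t r) r * ut t r * ur t r * r.

Definition flux_r (alpha : R) (u ut ur utr urr : R -> R -> R) (t r : R) : R :=
  (alpha ^ 2 * (2 * sin (u t r) * cos (u t r) * ur t r) / r ^ 2
     - 2 * alpha ^ 2 * sin (u t r) ^ 2 / r ^ 3) * ut t r * ur t r * r
  + wgt alpha (u t r) r * (utr t r * ur t r + ut t r * urr t r) * r
  + wgt alpha (u t r) r * ut t r * ur t r.

(* The Skyrme equation is the local energy conservation law
   d/dt (e r) = d/dr F: indeed the difference is u_t r times the equation. *)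
Lemma energy_conservation (alpha : R) (u ut ur utt utr urr : R -> R -> R) (t r : R) :
  r <> 0 ->
  skyrme_eq alpha r (u t r) (ut t r) (ur t r) (utt t r) (urr t r) ->
  rdens_t alpha u ut ur utt utr t r = flux_r alpha u ut ur utr urr t r.
Proof.
  intros Hr Heq. unfold skyrme_eq in Heq. rewrite sin_2a in Heq.
  unfold rdens_t, flux_r, wgt in *.
  apply Rminus_diag_uniq.
  transitivity (ut t r * r * ((1 + alpha ^ 2 * sin (u t r) ^ 2 / r ^ 2) * (utt t r - urr t r) -
      (1 - alpha ^ 2 * sin (u t r) ^ 2 / r ^ 2) * (ur t r / r) +
      2 * sin (u t r) * cos (u t r) / (2 * r ^ 2) *
      (alpha ^ 2 * (ut t r ^ 2 - ur t r ^ 2) + 1))).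
  - field. exact Hr.
  - rewrite Heq. ring.
Qed.

Lemma rdens_t_is_derive (alpha : R) (u ut ur utt utr : R -> R -> R) (t r : R) :
  r <> 0 ->
  partial_t u ut t r -> partial_t ut utt t r -> partial_t ur utr t r ->
  is_derive (fun s => rdens alpha u ut ur s r) t (rdens_t alpha u ut ur utt utr t r).
Proof.
  unfold partial_t. intros Hr H1 H2 H3. apply is_derive_Reals in H1, H2, H3.
  unfold rdens, edens, wgt. auto_derive.
  - repeat split; eexists; eauto.
  - rewrite (is_derive_unique _ _ _ H1), (is_derive_unique _ _ _ H2), (is_derive_unique _ _ _ H3).
    unfold rdens_t, wgt. field. exact Hr.
Qed.

Lemma flux_r_is_derive (alpha : R) (u ut ur utr urr : R -> R -> R) (t r : R) :
  r <> 0 ->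
  partial_r u ur t r -> partial_r ut utr t r -> partial_r ur urr t r ->
  is_derive (fun s => flux alpha u ut ur t s) r (flux_r alpha u ut ur utr urr t r).
Proof.
  unfold partial_r. intros Hr H1 H2 H3. apply is_derive_Reals in H1, H2, H3.
  unfold flux, wgt. auto_derive.
  - repeat split; try (eexists; eauto); auto.
  - rewrite (is_derive_unique _ _ _ H1), (is_derive_unique _ _ _ H2), (is_derive_unique _ _ _ H3).
    unfold flux_r, wgt. field. exact Hr.
Qed.

Lemma rdens_axis (alpha : R) (u ut ur : R -> R -> R) (t : R) : rdens alpha u ut ur t 0 = 0.
Proof. unfold rdens. ring. Qed.

Lemma rdens_nonneg (alpha : R) (u ut ur : R -> R -> R) (t r : R) :
  0 < r -> 0 <= rdens alpha u ut ur t r.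
Proof.
  intros Hr. unfold rdens, edens, wgt.
  assert (0 < r ^ 2) by (apply pow_lt; lra).
  assert (0 <= alpha ^ 2 * sin (u t r) ^ 2 / r ^ 2)
    by (apply Rdiv_le_0_compat; [apply Rmult_le_pos; apply pow2_ge_0 | lra]).
  assert (0 <= sin (u t r) ^ 2 / (2 * r ^ 2))
    by (apply Rdiv_le_0_compat; [apply pow2_ge_0 | lra]).
  assert (0 <= ut t r ^ 2) by apply pow2_ge_0.
  assert (0 <= ur t r ^ 2) by apply pow2_ge_0.
  apply Rmult_le_pos; [| lra].
  apply Rplus_le_le_0_compat; [| lra]. apply Rdiv_le_0_compat; [nra | lra].
Qed.

(* e r + F = r (w (u_t + u_r)^2 / 2 + sin^2 u / (2 r^2)) >= 0: energy can only
   leave the backward cone through its lateral boundary r = t. *)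
Lemma rdens_flux_nonneg (alpha : R) (u ut ur : R -> R -> R) (t r : R) :
  0 < r -> 0 <= rdens alpha u ut ur t r + flux alpha u ut ur t r.
Proof.
  intros Hr. unfold rdens, flux, edens, wgt.
  set (S := sin (u t r)). set (P := ut t r). set (Q := ur t r).
  assert (0 < r ^ 2) by (apply pow_lt; lra).
  set (W := alpha ^ 2 * S ^ 2 / r ^ 2).
  assert (0 <= W) by (apply Rdiv_le_0_compat; [apply Rmult_le_pos; apply pow2_ge_0 | lra]).
  assert (0 <= S ^ 2 / (2 * r ^ 2)) by (apply Rdiv_le_0_compat; [apply pow2_ge_0 | lra]).
  replace (((1 + W) * (P ^ 2 + Q ^ 2) / 2 + S ^ 2 / (2 * r ^ 2)) * r + (1 + W) * P * Q * r)
    with (r * ((1 + W) * ((P + Q) ^ 2 / 2) + S ^ 2 / (2 * r ^ 2))) by (field; lra).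
  assert (0 <= (P + Q) ^ 2) by apply pow2_ge_0.
  apply Rmult_le_pos; [lra |]. apply Rplus_le_le_0_compat; [| lra].
  apply Rmult_le_pos; lra.
Qed.

Definition dens_const (alpha M : R) : R := (1 + alpha ^ 2 * M ^ 2) * M ^ 2 + M ^ 2.

Lemma dens_const_nonneg (alpha M : R) : 0 <= dens_const alpha M.
Proof.
  unfold dens_const.
  assert (0 <= alpha ^ 2 * M ^ 2) by (apply Rmult_le_pos; apply pow2_ge_0).
  assert (0 <= M ^ 2) by apply pow2_ge_0. nra.
Qed.

Lemma rdens_flux_bound (alpha : R) (u ut ur : R -> R -> R) (t r M : R) :
  0 < r -> 0 <= M ->
  Rabs (u t r) <= M * r -> Rabs (ut t r) <= M -> Rabs (ur t r) <= M ->
  0 <= rdens alpha u ut ur t r <= r * dens_const alpha M /\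
  Rabs (flux alpha u ut ur t r) <= r * dens_const alpha M.
Proof.
  intros Hr HM Hu HP HQ.
  assert (HS : Rabs (sin (u t r)) <= M * r) by (eapply Rle_trans; [apply abs_sin_le | exact Hu]).
  split; [split; [now apply rdens_nonneg |] |]; unfold rdens, flux, edens, wgt, dens_const.
  all: set (S := sin (u t r)) in *; set (P := ut t r) in *; set (Q := ur t r) in *.
  all: assert (Hr2 : 0 < r ^ 2) by (apply pow_lt; lra).
  all: assert (HS2 : S ^ 2 <= M ^ 2 * r ^ 2)
         by (rewrite <- (pow2_abs S), <- Rpow_mult_distr; apply pow_incr; split; [apply Rabs_pos | exact HS]).
  all: assert (HP2 : P ^ 2 <= M ^ 2)
         by (rewrite <- (pow2_abs P); apply pow_incr; split; [apply Rabs_pos | exact HP]).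
  all: assert (HQ2 : Q ^ 2 <= M ^ 2)
         by (rewrite <- (pow2_abs Q); apply pow_incr; split; [apply Rabs_pos | exact HQ]).
  all: assert (HW : 0 <= S ^ 2 / r ^ 2 <= M ^ 2)
         by (split; [apply Rdiv_le_0_compat; [apply pow2_ge_0 | lra]
                    | apply Rle_div_l; lra]).
  all: set (W := S ^ 2 / r ^ 2) in *.
  all: assert (Ha : 0 <= alpha ^ 2) by apply pow2_ge_0.
  all: assert (Hw : 1 <= 1 + alpha ^ 2 * W <= 1 + alpha ^ 2 * M ^ 2)
         by (split; [nra | apply Rplus_le_compat_l, Rmult_le_compat_l; lra]).
  - replace (((1 + alpha ^ 2 * S ^ 2 / r ^ 2) * (P ^ 2 + Q ^ 2) / 2 + S ^ 2 / (2 * r ^ 2)) * r)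
      with (r * ((1 + alpha ^ 2 * W) * (P ^ 2 + Q ^ 2) / 2 + W / 2)) by (unfold W; field; lra).
    apply Rmult_le_compat_l; [lra |].
    assert ((1 + alpha ^ 2 * W) * (P ^ 2 + Q ^ 2) <= (1 + alpha ^ 2 * M ^ 2) * (M ^ 2 + M ^ 2))
      by (apply Rmult_le_compat; try lra; assert (0 <= P ^ 2) by apply pow2_ge_0;
          assert (0 <= Q ^ 2) by apply pow2_ge_0; lra).
    lra.
  - replace ((1 + alpha ^ 2 * S ^ 2 / r ^ 2) * P * Q * r)
      with (r * ((1 + alpha ^ 2 * W) * (P * Q))) by (unfold W; field; lra).
    assert (HPQ : Rabs (P * Q) <= M ^ 2)
      by (rewrite Rabs_mult; simpl; rewrite Rmult_1_r;
          apply Rmult_le_compat; auto; apply Rabs_pos).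
    rewrite Rabs_mult, (Rabs_right r) by lra.
    rewrite Rabs_mult, (Rabs_right (1 + alpha ^ 2 * W)) by lra.
    apply Rmult_le_compat_l; [lra |].
    assert ((1 + alpha ^ 2 * W) * Rabs (P * Q) <= (1 + alpha ^ 2 * M ^ 2) * M ^ 2)
      by (apply Rmult_le_compat; try lra; apply Rabs_pos).
    assert (0 <= M ^ 2) by apply pow2_ge_0. lra.
Qed.

(* AM-GM bound: for 0 < rho <= r, sin u u_r <= r (e(rho) rho) + 1/(2 alpha^2),
   using only the term alpha^2 sin^2 u u_r^2 / (2 rho^2) of the energy density. *)
Lemma sin_ur_le_rdens (a S P Q rho r : R) :
  0 < a -> 0 < rho <= r ->
  S * Q <= r * (((1 + a ^ 2 * S ^ 2 / rho ^ 2) * (P ^ 2 + Q ^ 2) / 2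
                 + S ^ 2 / (2 * rho ^ 2)) * rho) + 1 / (2 * a ^ 2).
Proof.
  intros Ha Hr.
  assert (Ha2 : 0 < a ^ 2) by (apply pow_lt; auto).
  set (X := a ^ 2 * S ^ 2 * Q ^ 2 / (2 * rho)).
  assert (HX : X <= ((1 + a ^ 2 * S ^ 2 / rho ^ 2) * (P ^ 2 + Q ^ 2) / 2
                     + S ^ 2 / (2 * rho ^ 2)) * rho).
  { replace (((1 + a ^ 2 * S ^ 2 / rho ^ 2) * (P ^ 2 + Q ^ 2) / 2 + S ^ 2 / (2 * rho ^ 2)) * rho)
      with (X + (rho * (P ^ 2 + Q ^ 2) / 2 + a ^ 2 * S ^ 2 * P ^ 2 / (2 * rho)
                 + S ^ 2 / (2 * rho))) by (unfold X; field; lra).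
    assert (0 <= P ^ 2) by apply pow2_ge_0. assert (0 <= Q ^ 2) by apply pow2_ge_0.
    assert (0 <= S ^ 2) by apply pow2_ge_0.
    assert (0 <= rho * (P ^ 2 + Q ^ 2) / 2) by (apply Rdiv_le_0_compat; nra).
    assert (0 <= a ^ 2 * S ^ 2 * P ^ 2 / (2 * rho))
      by (apply Rdiv_le_0_compat; [apply Rmult_le_pos; [apply Rmult_le_pos |] | ]; lra).
    assert (0 <= S ^ 2 / (2 * rho)) by (apply Rdiv_le_0_compat; lra).
    lra. }
  (* completing the square: r X + rho/(2 a^2 r) - S Q is a square over 2 a^2 r rho *)
  assert (Hsq : S * Q <= r * X + rho / (2 * a ^ 2 * r)).
  { assert (E : r * X + rho / (2 * a ^ 2 * r) - S * Q
                = (r * a ^ 2 * S * Q - rho) ^ 2 / (2 * a ^ 2 * r * rho))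
      by (unfold X; field; lra).
    assert (0 <= (r * a ^ 2 * S * Q - rho) ^ 2 / (2 * a ^ 2 * r * rho))
      by (apply Rdiv_le_0_compat; [apply pow2_ge_0 | repeat apply Rmult_lt_0_compat; lra]).
    lra. }
  assert (rho / (2 * a ^ 2 * r) <= 1 / (2 * a ^ 2))
    by (apply Rmult_le_reg_r with (2 * a ^ 2 * r); [nra |];
        field_simplify; lra).
  assert (r * X <= r * (((1 + a ^ 2 * S ^ 2 / rho ^ 2) * (P ^ 2 + Q ^ 2) / 2
                          + S ^ 2 / (2 * rho ^ 2)) * rho))
    by (apply Rmult_le_compat_l; lra).
  lra.
Qed.

(* A continuous g with g 0 = 0 and 1 - cos g <= 1/8 on [0, r] stays in (-1, 1):
   to leave it, g would have to pass through +-1, where 1 - cos g > 1/8. *)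
Lemma abs_lt_1_of_cos_near_1 (g : R -> R) (r : R) :
  0 <= r -> (forall x, 0 <= x <= r -> continuity_pt g x) -> g 0 = 0 ->
  (forall x, 0 <= x <= r -> 1 - cos (g x) <= 1 / 8) -> Rabs (g r) < 1.
Proof.
  intros Hr Hg Hg0 Hcos. apply Rnot_le_lt; intro Hge.
  destruct (IVT_closed (fun x => Rabs (g x)) 0 r 1) as [x [Hx Hgx]].
  - exact Hr.
  - intros x Hx. apply (continuity_pt_comp g Rabs); [now apply Hg | apply Rcontinuity_abs].
  - rewrite Hg0, Rabs_R0. lra.
  - assert (Hcos1 : cos (g x) = cos 1).
    { unfold Rabs in Hgx. destruct (Rcase_abs (g x)).
      - replace (g x) with (- 1) by lra. apply cos_neg.
      - now replace (g x) with 1 by lra. }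
    pose proof (cos_le_quadratic 1 ltac:(lra)). specialize (Hcos x Hx). lra.
Qed.

(* For |x| < 1, x^2 <= 4 (1 - cos x); so 1 - cos x <= c gives |x| <= 2 sqrt c. *)
Lemma abs_le_of_one_minus_cos (x c : R) :
  Rabs x < 1 -> 1 - cos x <= c -> Rabs x <= 2 * sqrt c.
Proof.
  intros Hx Hc.
  pose proof (cos_le_quadratic x (proj1 (Rabs_le_between x 1) ltac:(lra))).
  rewrite <- (sqrt_pow2 (Rabs x)) by apply Rabs_pos.
  replace 2 with (sqrt (2 ^ 2)) by (apply sqrt_pow2; lra).
  rewrite <- sqrt_mult by (try apply pow2_ge_0; pose proof (pow2_ge_0 x); lra).
  apply sqrt_le_1_alt. rewrite pow2_abs. lra.
Qed.

Lemma vertex_limit_of_sqrt_bound (T0 C ts : R) (f : R -> R -> R) :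
  0 <= C -> 0 < ts ->
  (forall t r, Omega T0 t r -> t <= ts -> Rabs (f t r) <= C * sqrt r) ->
  forall eps, 0 < eps -> exists d, 0 < d /\
    forall t r, Omega T0 t r -> sqrt (t ^ 2 + r ^ 2) < d -> Rabs (f t r) < eps.
Proof.
  intros HC Hts Hb eps Heps.
  set (q := eps / (C + 1)).
  assert (Hq : 0 < q) by (apply Rdiv_lt_0_compat; lra).
  exists (Rmin ts (q ^ 2)). split; [apply Rmin_pos; [lra | now apply pow_lt] |].
  intros t r [Ht Hr] Hlt.
  pose proof (Rmin_l ts (q ^ 2)); pose proof (Rmin_r ts (q ^ 2)).
  assert (Htd : t <= sqrt (t ^ 2 + r ^ 2)).
  { rewrite <- (sqrt_pow2 t) at 1 by lra. apply sqrt_le_1_alt.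
    pose proof (pow2_ge_0 r). lra. }
  assert (Hsr : sqrt r <= q)
    by (rewrite <- (sqrt_pow2 q) by lra; apply sqrt_le_1_alt; lra).
  apply Rle_lt_trans with (C * q).
  - eapply Rle_trans; [apply Hb; [split |]; lra | apply Rmult_le_compat_l; lra].
  - unfold q. apply Rmult_lt_reg_r with (C + 1); [lra |].
    replace (C * (eps / (C + 1)) * (C + 1)) with (C * eps) by (field; lra). nra.
Qed.

Definition holder_const (alpha E : R) : R := Rabs E + 1 / (2 * alpha ^ 2) + 1.

(* Points of U off the axis r = 0, where the energy density is regular. *)
Definition offaxis (U : R -> R -> Prop) (t r : R) : Prop := U t r /\ r <> 0.

Lemma offaxis_open (U : R -> R -> Prop) (t r : R) :
  open2 U -> offaxis U t r ->
  exists d, 0 < d /\ forall t' r', Rabs (t' - t) < d -> Rabs (r' - r) < d -> offaxis U t' r'.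
Proof.
  intros HU [Htr Hr]. destruct (HU t r Htr) as [d [Hd Hball]].
  assert (Hr' : 0 < Rabs r) by now apply Rabs_pos_lt.
  exists (Rmin d (Rabs r)). split; [now apply Rmin_pos |].
  intros t' r' Ht Hr''. pose proof (Rmin_l d (Rabs r)); pose proof (Rmin_r d (Rabs r)).
  split; [apply Hball; lra |].
  intros ->. rewrite Rminus_0_l, Rabs_Ropp in Hr''. lra.
Qed.

Section SmoothSolution.

Variables (alpha : R) (U : R -> R -> Prop) (u ut ur utt utr urr : R -> R -> R).
Hypothesis HU : open2 U.
Hypothesis Hreg : C2_on U u ut ur utt utr urr.

Lemma offaxis_continuity (t r : R) :
  offaxis U t r ->
  continuity_2d_pt (rdens alpha u ut ur) t r /\
  continuity_2d_pt (rdens_t alpha u ut ur utt utr) t r /\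
  continuity_2d_pt (flux_r alpha u ut ur utr urr) t r.
Proof.
  intros [Htr Hr].
  assert (Cu : continuity_2d_pt u t r) by exact (cont_on_2d_pt U _ t r HU (C2_cont_u Hreg) Htr).
  assert (Cut : continuity_2d_pt ut t r) by exact (cont_on_2d_pt U _ t r HU (C2_cont_ut Hreg) Htr).
  assert (Cur : continuity_2d_pt ur t r) by exact (cont_on_2d_pt U _ t r HU (C2_cont_ur Hreg) Htr).
  assert (Cutt : continuity_2d_pt utt t r) by exact (cont_on_2d_pt U _ t r HU (C2_cont_utt Hreg) Htr).
  assert (Cutr : continuity_2d_pt utr t r) by exact (cont_on_2d_pt U _ t r HU (C2_cont_utr Hreg) Htr).
  assert (Curr : continuity_2d_pt urr t r) by exact (cont_on_2d_pt U _ t r HU (C2_cont_urr Hreg) Htr).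
  assert (r ^ 2 <> 0) by now apply pow_nonzero.
  assert (r ^ 3 <> 0) by now apply pow_nonzero.
  assert (2 * r ^ 2 <> 0) by (apply Rmult_integral_contrapositive; split; auto; lra).
  unfold rdens, rdens_t, flux_r, edens, wgt, Rdiv.
  repeat split; repeat (first [ assumption | continuity_2d ]); simpl; auto; lra.
Qed.

Lemma offaxis_continuity_r (t r : R) :
  offaxis U t r ->
  continuity_pt (fun s => rdens alpha u ut ur t s) r /\
  continuity_pt (fun s => rdens_t alpha u ut ur utt utr t s) r /\
  continuity_pt (fun s => flux_r alpha u ut ur utr urr t s) r.
Proof.
  intros Hoff. destruct (offaxis_continuity t r Hoff) as [C1 [C2 C3]].
  repeat split; now apply continuity_2d_pt_r.
Qed.

Lemma rdens_t_offaxis (t r : R) :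
  offaxis U t r ->
  is_derive (fun s => rdens alpha u ut ur s r) t (rdens_t alpha u ut ur utt utr t r).
Proof.
  intros [Htr Hr]. apply rdens_t_is_derive;
    [exact Hr | apply (C2_dt_u Hreg) | apply (C2_dt_ut Hreg) | apply (C2_dt_ur Hreg)]; exact Htr.
Qed.

Lemma Derive_rdens_continuity (t r : R) :
  offaxis U t r ->
  continuity_2d_pt (fun a b => Derive (fun s => rdens alpha u ut ur s b) a) t r.
Proof.
  intros Hoff.
  apply continuity_2d_pt_ext_loc with (rdens_t alpha u ut ur utt utr);
    [| apply (offaxis_continuity t r Hoff)].
  destruct (offaxis_open U t r HU Hoff) as [d [Hd Hball]].
  exists (mkposreal d Hd). simpl. intros a b Ha Hb. symmetry.
  apply is_derive_unique, rdens_t_offaxis, Hball; assumption.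
Qed.

Lemma ex_RInt_rdens_offaxis (t a b : R) :
  (forall z, Rmin a b <= z <= Rmax a b -> offaxis U t z) -> ex_RInt (rdens alpha u ut ur t) a b.
Proof.
  intros Hoff. apply ex_RInt_of_continuity. intros z Hz.
  now apply offaxis_continuity_r, Hoff.
Qed.

Lemma annulus_energy_derive (y d e : R) :
  0 < d -> 0 < e <= 1 -> 0 <= y ->
  (forall y' r, Rabs (y' - y) < d -> e * y - d <= r <= y + d -> offaxis U y' r) ->
  is_derive (fun z => RInt (rdens alpha u ut ur z) (e * z) z) y
    (RInt (rdens_t alpha u ut ur utt utr y) (e * y) y
     - rdens alpha u ut ur y (e * y) * e + rdens alpha u ut ur y y).
Proof.
  intros Hd He Hy Hoff.
  set (f := rdens alpha u ut ur).
  assert (Hey : e * y <= y) by nra.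
  assert (Hd2 : 0 < d / 2) by lra.
  assert (Hoff0 : forall r, e * y - d <= r <= y + d -> offaxis U y r).
  { intros r Hr. apply Hoff; [rewrite Rminus_eq_0, Rabs_R0 |]; lra. }
  assert (Hint : forall y' a b, Rabs (y' - y) < d -> e * y - d <= a <= y + d ->
                   e * y - d <= b <= y + d -> ex_RInt (f y') a b).
  { intros y' a b Hy' Ha Hb. apply ex_RInt_rdens_offaxis. intros z Hz.
    apply Hoff; [exact Hy' | exact (interval_between _ _ a b z Ha Hb Hz)]. }
  assert (Hnear : forall P : R -> Prop,
            (forall y', Rabs (y' - y) < d -> P y') -> locally y P).
  { intros P HP. exists (mkposreal d Hd). intros y' Hy'. now apply HP. }
  assert (HD : is_derive (fun z => RInt (f z) (e * z) z) y
     (RInt (fun r => Derive (fun s => f s r) y) (e * y) y + - f y (e * y) * e + f y y * 1)).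
  { apply (is_derive_RInt_param_bound_comp f (fun z => e * z) (fun z => z) y e 1).
    - apply Hnear. intros y' Hy'. apply Hint; auto; lra.
    - exists (mkposreal _ Hd2). apply Hnear. intros y' Hy'. simpl. apply Hint; auto; lra.
    - exists (mkposreal _ Hd2). apply Hnear. intros y' Hy'. simpl. apply Hint; auto; lra.
    - auto_derive; auto; ring.
    - auto_derive; auto.
    - exists (mkposreal _ Hd2). apply Hnear. intros y' Hy' r Hr. simpl in Hr.
      eexists. apply rdens_t_offaxis, Hoff; [exact Hy' |].
      destruct Hr as [Hr1 Hr2]. split.
      + eapply Rle_trans; [| exact Hr1]. apply Rmin_glb; lra.
      + eapply Rle_trans; [exact Hr2 |]. apply Rmax_lub; lra.
    - intros r Hr. apply Derive_rdens_continuity, Hoff0.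
      rewrite Rmin_left, Rmax_right in Hr by lra. lra.
    - exists (mkposreal _ Hd2). simpl. intros a b Ha Hb.
      apply Rabs_def2 in Hb. apply Derive_rdens_continuity, Hoff; lra.
    - exists (mkposreal _ Hd2). simpl. intros a b Ha Hb.
      apply Rabs_def2 in Hb. apply Derive_rdens_continuity, Hoff; lra.
    - apply offaxis_continuity_r, Hoff0; lra.
    - apply offaxis_continuity_r, Hoff0; lra. }
  rewrite (RInt_ext _ (rdens_t alpha u ut ur utt utr y)) in HD.
  - replace (RInt (rdens_t alpha u ut ur utt utr y) (e * y) y - f y (e * y) * e + f y y)
      with (RInt (rdens_t alpha u ut ur utt utr y) (e * y) y
              + - f y (e * y) * e + f y y * 1) by ring.
    exact HD.
  - intros x Hx. rewrite Rmin_left, Rmax_right in Hx by lra.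
    apply is_derive_unique, rdens_t_offaxis, Hoff0; lra.
Qed.

(* By the conservation law, int_{e y}^{y} d/dt (e r) dr = F(y, y) - F(y, e y). *)
Lemma annulus_flux_identity (y e : R) :
  0 < e <= 1 -> 0 <= y ->
  (forall r, e * y <= r <= y -> offaxis U y r) ->
  (forall r, e * y < r < y ->
     skyrme_eq alpha r (u y r) (ut y r) (ur y r) (utt y r) (urr y r)) ->
  RInt (rdens_t alpha u ut ur utt utr y) (e * y) y =
    flux alpha u ut ur y y - flux alpha u ut ur y (e * y).
Proof.
  intros He Hy Hoff Hpde.
  assert (Hey : e * y <= y) by nra.
  rewrite (RInt_ext _ (flux_r alpha u ut ur utr urr y)).
  2: { intros x Hx. rewrite Rmin_left, Rmax_right in Hx by lra.
       apply energy_conservation; [exact (proj2 (Hoff x ltac:(lra))) | apply Hpde; lra]. }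
  apply is_RInt_unique, (is_RInt_derive (V := R_CompleteNormedModule) (flux alpha u ut ur y)).
  - intros x Hx. rewrite Rmin_left, Rmax_right in Hx by lra.
    destruct (Hoff x Hx) as [Hxu Hx0]. apply flux_r_is_derive;
      [exact Hx0 | apply (C2_dr_u Hreg) | apply (C2_dr_ut Hreg) | apply (C2_dr_ur Hreg)]; exact Hxu.
  - intros x Hx. rewrite Rmin_left, Rmax_right in Hx by lra.
    apply continuous_of_continuity_pt, offaxis_continuity_r, Hoff; exact Hx.
Qed.

Variable T0 : R.
Hypothesis HOmega : forall t r, Omega T0 t r -> U t r.
Hypothesis Hskyrme : forall t r, Omega T0 t r -> 0 < r ->
  skyrme_eq alpha r (u t r) (ut t r) (ur t r) (utt t r) (urr t r).
Hypothesis Haxis : forall t, 0 < t <= T0 -> u t 0 = 0.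

(* Since u vanishes on the axis, a bound on u_r gives |u| <= M r. *)
Lemma u_le_of_ur_bound (t r M : R) :
  0 < t <= T0 -> 0 <= r <= t ->
  (forall z, 0 <= z <= r -> Rabs (ur t z) <= M) -> Rabs (u t r) <= M * r.
Proof.
  intros Ht Hr HM.
  replace (u t r) with (u t r - u t 0) by (rewrite Haxis; [ring | exact Ht]).
  replace (M * r) with (M * (r - 0)) by ring.
  apply abs_diff_le_of_derive_bound with (ur t); [lra | | exact HM].
  intros x Hx. apply is_derive_Reals, (C2_dr_u Hreg), HOmega. split; [exact Ht | lra].
Qed.

Lemma derivatives_bounded_near_axis (t : R) :
  0 < t <= T0 ->
  exists d M, 0 < d /\ 0 <= M /\ forall z, 0 <= z < d ->
    Rabs (ut t z) <= M /\ Rabs (ur t z) <= M.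
Proof.
  intros Ht.
  assert (Ht0 : U t 0) by (apply HOmega; split; lra).
  destruct (cont_on_2d_pt U ut t 0 HU (C2_cont_ut Hreg) Ht0 (mkposreal 1 Rlt_0_1)) as [d1 Hd1].
  destruct (cont_on_2d_pt U ur t 0 HU (C2_cont_ur Hreg) Ht0 (mkposreal 1 Rlt_0_1)) as [d2 Hd2].
  exists (Rmin d1 d2), (Rabs (ut t 0) + Rabs (ur t 0) + 1).
  pose proof (Rabs_pos (ut t 0)); pose proof (Rabs_pos (ur t 0)).
  pose proof (cond_pos d1); pose proof (cond_pos d2).
  pose proof (Rmin_l d1 d2); pose proof (Rmin_r d1 d2).
  split; [now apply Rmin_pos |]. split; [lra |].
  intros z Hz.
  assert (Hz0 : Rabs (z - 0) = z) by (rewrite Rminus_0_r; apply Rabs_right; lra).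
  assert (Htt : Rabs (t - t) = 0) by (rewrite Rminus_eq_0; apply Rabs_R0).
  specialize (Hd1 t z ltac:(lra) ltac:(lra)). specialize (Hd2 t z ltac:(lra) ltac:(lra)).
  simpl in *.
  pose proof (Rabs_triang_inv (ut t z) (ut t 0)). pose proof (Rabs_triang_inv (ur t z) (ur t 0)).
  split; lra.
Qed.

(* The weighted density is Riemann integrable on every [a, b] within [0, t]:
   off the axis it is continuous, and at the axis it tends to 0 like O(r). *)
Lemma ex_RInt_rdens (t a b : R) :
  0 < t <= T0 -> 0 <= a <= b -> b <= t -> ex_RInt (rdens alpha u ut ur t) a b.
Proof.
  intros Ht Hab Hbt.
  destruct (Req_dec a b) as [-> | Hne]; [apply ex_RInt_point |].
  apply (ex_RInt_Chasles_2 (V := R_CompleteNormedModule) _ 0); [lra |].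
  apply ex_RInt_right_continuous_0; [lra | |].
  - intros z Hz. apply offaxis_continuity_r. split; [apply HOmega; split |]; lra.
  - destruct (derivatives_bounded_near_axis t Ht) as [d [M [Hd [HM HB]]]].
    pose proof (dens_const_nonneg alpha M) as HK. set (K := dens_const alpha M) in *.
    intros eps Heps. exists (Rmin (Rmin d t) (eps / (K + 1))).
    assert (Hq : 0 < eps / (K + 1)) by (apply Rdiv_lt_0_compat; lra).
    split; [repeat apply Rmin_pos; lra |].
    intros z Hz. rewrite rdens_axis, Rminus_0_r.
    pose proof (Rmin_l (Rmin d t) (eps / (K + 1))); pose proof (Rmin_r (Rmin d t) (eps / (K + 1))).
    pose proof (Rmin_l d t); pose proof (Rmin_r d t).
    assert (Hu : Rabs (u t z) <= M * z)
      by (apply u_le_of_ur_bound; [exact Ht | lra | intros y Hy; apply HB; lra]).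
    destruct (rdens_flux_bound alpha u ut ur t z M ltac:(lra) HM Hu) as [HA _];
      [apply HB; lra | apply HB; lra |].
    fold K in HA. rewrite Rabs_right by lra.
    apply Rle_lt_trans with (z * K); [lra |].
    apply Rle_lt_trans with (eps / (K + 1) * K); [apply Rmult_le_compat_r; lra |].
    apply Rmult_lt_reg_r with (K + 1); [lra |].
    unfold Rdiv. replace (eps * / (K + 1) * K * (K + 1)) with (eps * K) by (field; lra). nra.
Qed.

Lemma energy_is_RInt :
  0 < T0 -> energy alpha u ut ur T0 = RInt (rdens alpha u ut ur T0) 0 T0.
Proof.
  intros HT.
  assert (Ex : ex_RInt (rdens alpha u ut ur T0) 0 T0) by (apply ex_RInt_rdens; lra).
  unfold energy.
  destruct (epsilon_spec (inhabits 0) (fun E => exists pr : Riemann_integrable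
                 (fun r => edens alpha u ut ur T0 r * r) 0 T0, RiemannInt pr = E)) as [pr Hpr].
  { exists (RInt (rdens alpha u ut ur T0) 0 T0), (ex_RInt_Reals_0 _ _ _ Ex).
    symmetry. apply RInt_Reals. }
  rewrite <- Hpr. symmetry. apply (RInt_Reals (fun r => edens alpha u ut ur T0 r * r)).
Qed.

Lemma cone_density_bounds (t1 : R) :
  0 < t1 < T0 ->
  exists K, 0 <= K /\ forall s r, t1 <= s <= T0 -> 0 < r <= t1 ->
    0 <= rdens alpha u ut ur s r <= r * K /\ Rabs (flux alpha u ut ur s r) <= r * K.
Proof.
  intros Ht1.
  assert (Hcont : forall f, cont_on U f -> forall x y, t1 <= x <= T0 -> 0 <= y <= t1 ->
                    continuity_2d_pt f x y).
  { intros f Hf x y Hx Hy. apply cont_on_2d_pt with U; [exact HU | exact Hf |].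
    apply HOmega; split; lra. }
  destruct (bounded_on_rectangle ut t1 T0 0 t1 (Hcont ut (C2_cont_ut Hreg))) as [M1 HM1].
  destruct (bounded_on_rectangle ur t1 T0 0 t1 (Hcont ur (C2_cont_ur Hreg))) as [M2 HM2].
  set (M := Rabs M1 + Rabs M2).
  exists (dens_const alpha M). split; [apply dens_const_nonneg |].
  intros s r Hs Hr.
  pose proof (Rle_abs M1); pose proof (Rle_abs M2).
  pose proof (Rabs_pos M1); pose proof (Rabs_pos M2).
  assert (Hut : forall y, 0 <= y <= t1 -> Rabs (ut s y) <= M)
    by (intros y Hy; specialize (HM1 s y Hs Hy); unfold M; lra).
  assert (Hur : forall y, 0 <= y <= t1 -> Rabs (ur s y) <= M)
    by (intros y Hy; specialize (HM2 s y Hs Hy); unfold M; lra).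
  apply rdens_flux_bound; [lra | unfold M; lra | | apply Hut; lra | apply Hur; lra].
  apply u_le_of_ur_bound; [lra | lra | intros z Hz; apply Hur; lra].
Qed.

Section Monotonicity.

Variables (t1 K : R).
Hypothesis Ht1 : 0 < t1 < T0.
Hypothesis HK : 0 <= K.
Hypothesis Hbounds : forall s r, t1 <= s <= T0 -> 0 < r <= t1 ->
  0 <= rdens alpha u ut ur s r <= r * K /\ Rabs (flux alpha u ut ur s r) <= r * K.

(* Lower bound on the derivative of the annulus energy G(c) = int_{e c}^{c} e r dr:
   by the conservation law G'(c) = (e r + F)(c, c) - F(c, e c) - e (e r)(c, e c),
   which is >= -2 e T0 K since e r + F >= 0. *)
Lemma annulus_energy_derive_lower (e c : R) :
  0 < e <= t1 / T0 -> t1 <= c <= T0 ->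
  (forall r, e * c <= r <= c -> offaxis U c r) ->
  - (2 * e * T0 * K) <= RInt (rdens_t alpha u ut ur utt utr c) (e * c) c
                         - rdens alpha u ut ur c (e * c) * e + rdens alpha u ut ur c c.
Proof.
  intros He Hc Hoff.
  assert (HeT : e * T0 <= t1) by (apply Rle_div_r; lra).
  assert (He1 : e <= 1) by (apply Rmult_le_reg_r with T0; lra).
  rewrite (annulus_flux_identity c e); [| lra | lra | exact Hoff |].
  - pose proof (rdens_flux_nonneg alpha u ut ur c c ltac:(lra)).
    destruct (Hbounds c (e * c) ltac:(lra) ltac:(split; nra)) as [HA HB].
    apply Rabs_le_between in HB.
    assert (e * c * K <= e * T0 * K) by (apply Rmult_le_compat_r; nra).
    assert (rdens alpha u ut ur c (e * c) * e <= e * c * K) by nra.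
    lra.
  - intros r Hr. apply Hskyrme; [split; [lra | split; nra] | nra].
Qed.

Lemma annulus_energy_growth (e : R) :
  0 < e <= t1 / T0 ->
  RInt (rdens alpha u ut ur t1) (e * t1) t1 - 2 * e * T0 * K * (T0 - t1)
    <= RInt (rdens alpha u ut ur T0) (e * T0) T0.
Proof.
  intros He.
  assert (HeT : e * T0 <= t1) by (apply Rle_div_r; lra).
  assert (He1 : e <= 1) by (apply Rmult_le_reg_r with T0; lra).
  destruct (uniform_neighbourhood U t1 T0 HU ltac:(lra)) as [eta [Heta Htube]].
  { intros t r Ht Hr. apply HOmega. split; [lra | exact Hr]. }
  set (d := Rmin eta (e * t1) / 2).
  assert (Hd : 0 < d) by (unfold d; assert (0 < Rmin eta (e * t1)) by (apply Rmin_pos; nra); lra).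
  assert (Hoff : forall y, t1 <= y <= T0 -> forall y' r, Rabs (y' - y) < d ->
                   e * y - d <= r <= y + d -> offaxis U y' r).
  { intros y Hy y' r Hy' Hr.
    assert (d < eta) by (unfold d; pose proof (Rmin_l eta (e * t1)); lra).
    assert (d <= e * t1 / 2) by (unfold d; pose proof (Rmin_r eta (e * t1)); lra).
    split; [| nra].
    destruct (Rle_dec r y).
    - apply (Htube y r); [lra | nra | lra | rewrite Rminus_eq_0, Rabs_R0; lra].
    - apply (Htube y y); [lra | lra | lra | apply Rabs_def1; lra]. }
  set (G := fun y => RInt (rdens alpha u ut ur y) (e * y) y).
  set (D := fun y => RInt (rdens_t alpha u ut ur utt utr y) (e * y) y
              - rdens alpha u ut ur y (e * y) * e + rdens alpha u ut ur y y).
  assert (Gd : forall y, t1 <= y <= T0 -> is_derive G y (D y))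
    by (intros y Hy; apply (annulus_energy_derive y d e); try lra; now apply Hoff).
  destruct (MVT_gen G t1 T0 D) as [c [Hc Hmvt]].
  { intros x Hx. rewrite Rmin_left, Rmax_right in Hx by lra. apply Gd. lra. }
  { intros x Hx. rewrite Rmin_left, Rmax_right in Hx by lra.
    apply continuity_pt_filterlim, (ex_derive_continuous (K := R_AbsRing) (V := R_NormedModule)).
    eexists; now apply Gd. }
  rewrite Rmin_left, Rmax_right in Hc by lra.
  assert (HDc : - (2 * e * T0 * K) <= D c).
  { apply annulus_energy_derive_lower; [exact He | lra |].
    intros r Hr. apply (Hoff c); [lra | rewrite Rminus_eq_0, Rabs_R0 |]; lra. }
  assert (- (2 * e * T0 * K) * (T0 - t1) <= D c * (T0 - t1))
    by (apply Rmult_le_compat_r; lra).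
  change (G t1 - 2 * e * T0 * K * (T0 - t1) <= G T0). lra.
Qed.

Lemma inner_energy_small (e y : R) :
  0 < e <= t1 / T0 -> t1 <= y <= T0 ->
  Rabs (RInt (rdens alpha u ut ur y) 0 (e * y)) <= e * T0 * (T0 * K).
Proof.
  intros He Hy.
  assert (HeT : e * T0 <= t1) by (apply Rle_div_r; lra).
  assert (Hey : 0 <= e * y <= e * T0) by (split; nra).
  eapply Rle_trans.
  - apply abs_RInt_le_const with (M := e * y * K); [lra | apply ex_RInt_rdens; lra |].
    intros z Hz. destruct (Req_dec z 0) as [-> | Hz0].
    + rewrite rdens_axis, Rabs_R0. apply Rmult_le_pos; lra.
    + destruct (Hbounds y z ltac:(lra) ltac:(lra)) as [HA _].
      rewrite Rabs_right by lra. nra.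
  - rewrite Rminus_0_r.
    assert (e * y * K <= T0 * K) by (apply Rmult_le_compat_r; nra).
    apply Rmult_le_compat; nra.
Qed.

End Monotonicity.

(* Energy monotonicity E(t1) <= E(T0): E(T0) - E(t1) >= -e C for every small e. *)
Lemma energy_monotone (t1 : R) :
  0 < t1 < T0 ->
  RInt (rdens alpha u ut ur t1) 0 t1 <= RInt (rdens alpha u ut ur T0) 0 T0.
Proof.
  intros Ht1.
  destruct (cone_density_bounds t1 Ht1) as [K [HK Hbounds]].
  apply (le_of_le_plus_eps _ _ (t1 / T0) (2 * T0 * K * (T0 - t1) + 2 * T0 * T0 * K)).
  - apply Rdiv_lt_0_compat; lra.
  - assert (0 <= T0 * K) by (apply Rmult_le_pos; lra). nra.
  - intros e He.
    assert (HeT : e * T0 <= t1) by (apply Rle_div_r; lra).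
    assert (Hsplit : forall y, t1 <= y <= T0 -> RInt (rdens alpha u ut ur y) 0 y =
              RInt (rdens alpha u ut ur y) 0 (e * y) + RInt (rdens alpha u ut ur y) (e * y) y).
    { intros y Hy. symmetry.
      apply (RInt_Chasles (V := R_CompleteNormedModule)); apply ex_RInt_rdens; nra. }
    rewrite (Hsplit t1), (Hsplit T0) by lra.
    pose proof (annulus_energy_growth t1 K Ht1 HK Hbounds e He).
    pose proof (proj1 (Rabs_le_between _ _) (inner_energy_small t1 K Ht1 HK Hbounds e t1 He ltac:(lra))).
    pose proof (proj1 (Rabs_le_between _ _) (inner_energy_small t1 K Ht1 HK Hbounds e T0 He ltac:(lra))).
    nra.
Qed.

(* Since u(t, 0) = 0: 1 - cos u(t, r) = int_0^r sin u u_r. *)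
Lemma one_minus_cos_as_RInt (t r : R) :
  0 < t <= T0 -> 0 <= r <= t ->
  is_RInt (fun z => sin (u t z) * ur t z) 0 r (1 - cos (u t r)).
Proof.
  intros Ht Hr.
  replace (1 - cos (u t r)) with (minus (- cos (u t r)) (- cos (u t 0)))
    by (rewrite Haxis, cos_0 by exact Ht; unfold minus, plus, opp; simpl; ring).
  apply (is_RInt_derive (V := R_CompleteNormedModule) (fun z => - cos (u t z)));
    intros x Hx; rewrite Rmin_left, Rmax_right in Hx by lra;
    assert (Hx' : U t x) by (apply HOmega; split; lra).
  - assert (D : is_derive (fun z => u t z) x (ur t x))
      by (apply is_derive_Reals, (C2_dr_u Hreg), Hx').
    auto_derive; [eexists; exact D |].
    rewrite (is_derive_unique (fun z : R => u t z) x (ur t x) D). ring.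
  - apply continuous_of_continuity_pt, (continuity_2d_pt_r (fun a b => sin (u a b) * ur a b)).
    apply continuity_2d_pt_mult; [apply continuity_2d_pt_sin |];
      apply cont_on_2d_pt with U; auto; apply Hreg.
Qed.

Hypothesis Halpha : 0 < alpha.

Lemma one_minus_cos_le (t r : R) :
  0 < t <= T0 -> 0 <= r <= t ->
  1 - cos (u t r) <= r * (RInt (rdens alpha u ut ur t) 0 t + 1 / (2 * alpha ^ 2)).
Proof.
  intros Ht Hr.
  destruct (Req_dec r 0) as [-> | Hr0]; [rewrite Haxis, cos_0 by exact Ht; lra |].
  set (E := rdens alpha u ut ur t).
  assert (ExE : forall b, 0 <= b <= t -> ex_RInt E 0 b) by (intros; apply ex_RInt_rdens; lra).
  (* integrate the pointwise AM-GM bound sin u u_r <= r (e r) + 1/(2 alpha^2) *)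
  assert (HAMGM : 1 - cos (u t r) <= r * RInt E 0 r + r * (1 / (2 * alpha ^ 2))).
  { assert (Hg : is_RInt (fun z => r * E z + 1 / (2 * alpha ^ 2)) 0 r
                   (r * RInt E 0 r + r * (1 / (2 * alpha ^ 2)))).
    { replace (r * RInt E 0 r + r * (1 / (2 * alpha ^ 2)))
        with (plus (scal r (RInt E 0 r)) (scal (r - 0) (1 / (2 * alpha ^ 2))))
        by (unfold plus, scal; simpl; unfold mult; simpl; ring).
      apply (is_RInt_plus (V := R_NormedModule)).
      - apply (is_RInt_scal (V := R_NormedModule)), (RInt_correct (V := R_CompleteNormedModule)).
        apply ExE; lra.
      - apply (is_RInt_const (V := R_NormedModule)). }
    rewrite <- (is_RInt_unique _ _ _ _ (one_minus_cos_as_RInt t r Ht Hr)),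
      <- (is_RInt_unique _ _ _ _ Hg).
    apply RInt_le; [lra | eexists; apply one_minus_cos_as_RInt; lra | eexists; exact Hg |].
    intros x Hx. unfold E, rdens, edens, wgt. apply sin_ur_le_rdens; lra. }
  assert (Hsub : RInt E 0 r <= RInt E 0 t).
  { rewrite <- (RInt_Chasles (V := R_CompleteNormedModule) E 0 r t)
      by (apply ex_RInt_rdens; lra).
    assert (0 <= RInt E r t)
      by (apply RInt_ge_0; [lra | apply ex_RInt_rdens; lra | intros; apply rdens_nonneg; lra]).
    unfold plus. simpl. lra. }
  assert (r * RInt E 0 r <= r * RInt E 0 t) by (apply Rmult_le_compat_l; lra).
  lra.
Qed.

(* The Hoelder-1/2 bound near the vertex, with K = holder_const alpha E(T0):
   for t <= 1/(8K), |u(t, r)| <= 2 sqrt K sqrt r. *)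
Lemma sqrt_bound :
  0 < T0 ->
  exists ts, 0 < ts <= T0 /\ forall t r, Omega T0 t r -> t <= ts ->
    Rabs (u t r) <= 2 * sqrt (holder_const alpha (RInt (rdens alpha u ut ur T0) 0 T0)) * sqrt r.
Proof.
  intros HT.
  set (K := holder_const alpha (RInt (rdens alpha u ut ur T0) 0 T0)).
  assert (Ha2 : 0 < 1 / (2 * alpha ^ 2))
    by (apply Rdiv_lt_0_compat; [lra | pose proof (pow_lt alpha 2 Halpha); lra]).
  assert (HK : 1 <= K)
    by (unfold K, holder_const; pose proof (Rabs_pos (RInt (rdens alpha u ut ur T0) 0 T0)); lra).
  (* by monotonicity, 1 - cos u <= r K on the whole cone *)
  assert (Hcos : forall t r, Omega T0 t r -> 1 - cos (u t r) <= r * K).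
  { intros t r [Ht Hr].
    assert (RInt (rdens alpha u ut ur t) 0 t <= RInt (rdens alpha u ut ur T0) 0 T0)
      by (destruct (Req_dec t T0) as [-> | Hne]; [lra | apply energy_monotone; lra]).
    pose proof (Rle_abs (RInt (rdens alpha u ut ur T0) 0 T0)).
    eapply Rle_trans; [now apply one_minus_cos_le |].
    apply Rmult_le_compat_l; [lra |]. unfold K, holder_const. lra. }
  assert (Hq : 0 < 1 / (8 * K)) by (apply Rdiv_lt_0_compat; lra).
  exists (Rmin T0 (1 / (8 * K))). split; [split; [now apply Rmin_pos | apply Rmin_l] |].
  intros t r [Ht Hr] Hts.
  assert (HtK : t * K <= 1 / 8).
  { apply Rle_trans with (1 / (8 * K) * K); [apply Rmult_le_compat_r; [lra |] | right; field; lra].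
    eapply Rle_trans; [exact Hts | apply Rmin_r]. }
  assert (Hsmall : Rabs (u t r) < 1).
  { apply (abs_lt_1_of_cos_near_1 (u t)); [lra | | now apply Haxis |].
    - intros x Hx. apply (continuity_2d_pt_r u), cont_on_2d_pt with U; auto; [apply Hreg |].
      apply HOmega. split; lra.
    - intros x Hx. assert (1 - cos (u t x) <= x * K) by (apply Hcos; split; lra). nra. }
  rewrite Rmult_assoc, <- sqrt_mult by lra.
  apply abs_le_of_one_minus_cos; [exact Hsmall |].
  rewrite Rmult_comm. now apply Hcos.
Qed.

End SmoothSolution.

Theorem proposition3 :
  forall alpha : R, 0 < alpha ->
  exists Cf : R -> R,
  forall (T0 : R), 0 < T0 ->
  forall (u ut ur utt urr : R -> R -> R) (U : R -> R -> Prop),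
    open2 U ->
    (forall t r, Omega T0 t r -> U t r) ->
    Cinf U u ->
    (forall t r, U t r ->
       partial_t u ut t r /\ partial_r u ur t r /\
       partial_t ut utt t r /\ partial_r ur urr t r) ->
    (forall t r, Omega T0 t r -> 0 < r ->
       skyrme_eq alpha r (u t r) (ut t r) (ur t r) (utt t r) (urr t r)) ->
    (forall t, 0 < t <= T0 -> u t 0 = 0) ->
    (forall eps, 0 < eps -> exists d, 0 < d /\
       forall t r, Omega T0 t r -> sqrt (t ^ 2 + r ^ 2) < d -> Rabs (u t r) < eps)
    /\
    (exists ts, 0 < ts <= T0 /\
       forall t r, Omega T0 t r -> t <= ts ->
         Rabs (u t r) <= Cf (energy alpha u ut ur T0) * sqrt r).
Proof.
  intros alpha Ha.
  exists (fun E => 2 * sqrt (holder_const alpha E)).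
  intros T0 HT u ut ur utt urr U HU HOmega Hsmooth Hpartials Hskyrme Haxis.
  destruct (C2_of_smooth U u ut ur utt urr HU Hsmooth Hpartials) as [utr Hreg].
  rewrite (energy_is_RInt alpha U u ut ur utt utr urr HU Hreg T0 HOmega Haxis HT).
  destruct (sqrt_bound alpha U u ut ur utt utr urr HU Hreg T0 HOmega Hskyrme Haxis Ha HT)
    as [ts [Hts Hbound]].
  split.
  - set (C := 2 * sqrt (holder_const alpha (RInt (rdens alpha u ut ur T0) 0 T0))) in Hbound.
    apply (vertex_limit_of_sqrt_bound T0 C ts u); [| lra | exact Hbound].
    pose proof (sqrt_pos (holder_const alpha (RInt (rdens alpha u ut ur T0) 0 T0))).
    unfold C. lra.
  - exists ts. split; [exact Hts | exact Hbound].
Qed.
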